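(* Let $\lambda$ be a nonzero real number and let $n,r$ be positive integers. Then $$\sum_{k=1}^{n}(-1)^{k}H_{k,\lambda}^{(r)}\,k!\,S_{2,\lambda}(n,k)=(-1)^{n}\langle r\rangle_{n-1,\lambda}\,n.$$ In particular, for $r=1$ (provided $\langle 1\rangle_{n-1,\lambda}\neq 0$), $$\frac{1}{\langle 1\rangle_{n-1,\lambda}}\sum_{k=1}^{n}(-1)^{n-k}H_{k,\lambda}\,k!\,S_{2,\lambda}(n,k)=n.$$
   Context: For real $x$ and integer $k\ge0$: $(x)_{0,\lambda}=1$, $(x)_{k,\lambda}=x(x-\lambda)\cdots(x-(k-1)\lambda)$; $\langle x\rangle_{0,\lambda}=1$, $\langle x\rangle_{k,\lambda}=x(x+\lambda)\cdots(x+(k-1)\lambda)$; $(x)_0=1$, $(x)_k=x(x-1)\cdots(x-k+1)$. The degenerate Stirling numbers of the second kind $S_{2,\lambda}(n,k)$ are defined by $(x)_{n,\lambda}=\sum_{k=0}^{n}S_{2,\lambda}(n,k)(x)_{k}$ for $n\ge0$; equivalently $\frac{1}{k!}(e_\lambda(t)-1)^k=\sum_{n\ge k}S_{2,\lambda}(n,k)\frac{t^n}{n!}$, where $e_\lambda(t)=\sum_{k\ge0}(1)_{k,\lambda}t^k/k!=(1+\lambda t)^{1/\lambda}$. The degenerate harmonic numbers are $H_{0,\lambda}=0$, $H_{n,\lambda}=\sum_{k=1}^{n}\frac{1}{\lambda}\binom{\lambda}{k}(-1)^{k-1}$ for $n\ge1$; the degenerate hyperharmonic numbers are $H_{n,\lambda}^{(1)}=H_{n,\lambda}$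 and $H_{n,\lambda}^{(r)}=\sum_{k=1}^{n}H_{k,\lambda}^{(r-1)}$ for $r\ge2$. *)

From HB Require Import structures.
From mathcomp Require Import all_boot all_order all_algebra.
Set Implicit Arguments. Unset Strict Implicit. Unset Printing Implicit Defensive.
Import Order.TTheory GRing.Theory Num.Theory.
Local Open Scope ring_scope.

Section DegDefs.
Variable R : realFieldType.

Definition dfall (x lam : R) (k : nat) : R := \prod_(i < k) (x - i%:R * lam).
Definition drise (x lam : R) (k : nat) : R := \prod_(i < k) (x + i%:R * lam).
Definition ffall (x : R) (k : nat) : R := \prod_(i < k) (x - i%:R).

(* e_lambda(t) - 1, truncated at degree n: sum_{1<=j<=n} (1)_{j,lam} t^j / j! *)
Definition elam_m1_trunc (lam : R) (n : nat) : {poly R} :=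
  \poly_(j < n.+1) (if j == 0%N then 0 else dfall 1 lam j / (j`!)%:R).

(* degenerate Stirling numbers of the second kind, via the exponential
   generating function  (1/k!) (e_lam(t) - 1)^k = sum_n S2(n,k) t^n/n!
   (the truncation at degree n does not affect the coefficient of t^n). *)
Definition S2lam (lam : R) (n k : nat) : R :=
  (n`!)%:R / (k`!)%:R * ((elam_m1_trunc lam n) ^+ k)`_n.

Definition gbinom (x : R) (k : nat) : R := ffall x k / (k`!)%:R.

Definition Hlam (lam : R) (n : nat) : R :=
  \sum_(1 <= k < n.+1) lam^-1 * gbinom lam k * (-1) ^+ k.-1.

(* degenerate hyperharmonic numbers H^{(r)}_{n,lam}, r >= 1
   (the value at r = 0 is a junk value equal to H_{n,lam}) *)
Fixpoint Hhyp (lam : R) (r n : nat) : R :=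
  match r with
  | 0%N => Hlam lam n
  | r'.+1 => if r' is 0%N then Hlam lam n
             else \sum_(1 <= k < n.+1) Hhyp lam r' k
  end.

End DegDefs.

From mathcomp Require Import all_boot all_algebra ring zify.
Set Implicit Arguments.
Unset Strict Implicit.
Unset Printing Implicit Defensive.

Import GRing.Theory Num.Theory.
Local Open Scope ring_scope.

(* The degenerate Stirling numbers obey the triangular recurrence
   S(m+1,k+1) = S(m,k) + (k+1 - lam m) S(m,k+1), which comes from the
   differential equation (1 + lam t) e_lam'(t) = e_lam(t); by induction on m it
   gives the expansion (x)_{m,lam} = sum_k S(m,k) (x)_k.  On the other side the
   degenerate hyperharmonic numbers have the closed form
   H^(r)_{k,lam} = lam^-1 (C(r+k-1,k) - C(r-lam+k-1,k)), i.e.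
   (-1)^k k! H^(r)_{k,lam} = lam^-1 ((-r)_k - (lam-r)_k).  Summing against
   S(n,k) therefore gives lam^-1 ((-r)_{n,lam} - (lam-r)_{n,lam}), and the two
   degenerate falling factorials share the factor (-r)_{n-1,lam}. *)

Section FactorialProducts.
Variable R : realFieldType.
Implicit Types (x l : R) (k : nat).

Lemma natrS_neq0 k : k.+1%:R != 0 :> R.
Proof. by rewrite pnatr_eq0. Qed.

Lemma natr_fact_neq0 k : k`!%:R != 0 :> R.
Proof. by rewrite pnatr_eq0 -lt0n fact_gt0. Qed.

Lemma dfallS x l k : dfall x l k.+1 = dfall x l k * (x - k%:R * l).
Proof. by rewrite /dfall big_ord_recr. Qed.

Lemma dfallSl x l k : dfall x l k.+1 = x * dfall (x - l) l k.
Proof.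
rewrite /dfall big_ord_recl /= mul0r subr0; congr (_ * _).
by apply: eq_bigr => i _; rewrite /= -natr1; ring.
Qed.

Lemma driseS x l k : drise x l k.+1 = drise x l k * (x + k%:R * l).
Proof. by rewrite /drise big_ord_recr. Qed.

Lemma driseSl x l k : drise x l k.+1 = x * drise (x + l) l k.
Proof.
rewrite /drise big_ord_recl /= mul0r addr0; congr (_ * _).
by apply: eq_bigr => i _; rewrite /= -natr1; ring.
Qed.

Lemma ffall_dfall x k : ffall x k = dfall x 1 k.
Proof. by apply: eq_bigr => i _; rewrite mulr1. Qed.

Lemma ffallS x k : ffall x k.+1 = ffall x k * (x - k%:R).
Proof. by rewrite !ffall_dfall dfallS mulr1. Qed.

Lemma dfallN x l k : dfall (- x) l k = (-1) ^+ k * drise x l k.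
Proof.
elim: k => [|k IHk]; first by rewrite /dfall /drise !big_ord0 mulr1.
by rewrite dfallS driseS IHk exprS; ring.
Qed.

Lemma drise1_fact k : drise 1 1 k = k`!%:R :> R.
Proof.
elim: k => [|k IHk]; first by rewrite /drise big_ord0.
by rewrite driseS IHk mulr1 addrC natr1 factS natrM mulrC.
Qed.

Lemma dfall_diff_shift l x n : l != 0 ->
  l^-1 * (dfall (- x) l n.+1 - dfall (l - x) l n.+1)
  = (-1) ^+ n.+1 * drise x l n * n.+1%:R.
Proof.
move=> l0; rewrite dfallS dfallSl (_ : l - x - l = - x); last by ring.
by rewrite dfallN exprS -natr1; field.
Qed.

End FactorialProducts.

(* [field] states its side conditions with [n.+1%:R] and [n.+2%:R] normalised
   to [1 + n%:R] and [2 + n%:R]. *)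
Ltac field_natr :=
  field; rewrite ?nat1r -?natrD ?natrS_neq0 ?natr_fact_neq0 /=.

Section PolyCoefficients.
Variable R : nzRingType.
Implicit Types p q s : {poly R}.

Lemma coefMl_eq_upto p q s m : (forall i, (i <= m)%N -> p`_i = q`_i) ->
  (p * s)`_m = (q * s)`_m.
Proof. by move=> pq; rewrite !coefM; apply: eq_bigr => j _; rewrite pq // -ltnS. Qed.

Lemma coef_1DZX_deriv (a : R) p m :
  ((1 + a *: 'X) * p^`())`_m = p`_m.+1 *+ m.+1 + a * (p`_m *+ m).
Proof.
rewrite mulrDl mul1r -scalerAl coefD coefZ coefXM !coef_deriv.
by case: m => [|m] //=; rewrite mulr0n.
Qed.

Lemma coef_exp_eq_upto p q m : (forall i, (i <= m)%N -> p`_i = q`_i) ->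
  forall k, (p ^+ k)`_m = (q ^+ k)`_m.
Proof.
move=> pq k; elim: k m pq => [|k IHk] m pq; first by rewrite !expr0.
rewrite !exprS !coefM; apply: eq_bigr => [[j /= ltjm]] _.
by rewrite pq ?IHk // => i lei; apply: pq; lia.
Qed.

Lemma coef_exp_lt p k i : p`_0 = 0 -> (i < k)%N -> (p ^+ k)`_i = 0.
Proof.
move=> p0; elim: k i => [|k IHk] i ltik //.
rewrite exprS coefM big1 // => [[[|j] ltji]] _ /=; first by rewrite p0 mul0r.
by rewrite IHk ?mulr0 //; lia.
Qed.

End PolyCoefficients.

Section DegenerateStirling.
Variable R : realFieldType.
Variable lam : R.
Notation E N := (elam_m1_trunc lam N).

Lemma coef_elam_m1_trunc N j :
  (E N)`_j = if (0 < j <= N)%N then dfall 1 lam j / j`!%:R else 0.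
Proof. by rewrite coef_poly ltnS; case: j. Qed.

Lemma coef0_elam_m1_trunc N : (E N)`_0 = 0.
Proof. by rewrite coef_elam_m1_trunc. Qed.

(* the differential equation (1 + lam t) e_lam'(t) = e_lam(t), below the
   truncation degree *)
Lemma elam_m1_trunc_ode N j : (j < N)%N ->
  ((1 + lam *: 'X) * (E N)^`())`_j = (1 + E N)`_j.
Proof.
move=> ltjN; rewrite coef_1DZX_deriv coefD coef1 !coef_elam_m1_trunc ltjN.
case: j ltjN => [|j] ltjN.
  by rewrite /dfall big_ord1 /= mul0r subr0 mulr0 !addr0 divr1.
by rewrite /= (ltnW ltjN) add0r dfallS factS natrM; field_natr.
Qed.

Lemma coef_exp_elam_m1_trunc N m k : (m < N)%N ->
  ((E N) ^+ k.+1)`_m.+1 *+ m.+1 + lam * (((E N) ^+ k.+1)`_m *+ m)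
  = (((E N) ^+ k)`_m + ((E N) ^+ k.+1)`_m) *+ k.+1.
Proof.
move=> ltmN; rewrite -coef_1DZX_deriv deriv_exp mulrnAr coefMn mulrA.
rewrite (@coefMl_eq_upto _ _ (1 + E N)) => [|i leim]; last first.
  by apply: elam_m1_trunc_ode; lia.
by rewrite mulrDl mul1r -exprS coefD.
Qed.

Lemma S2lam_trunc N m k : (m <= N)%N ->
  S2lam lam m k = m`!%:R / k`!%:R * ((E N) ^+ k)`_m.
Proof.
move=> lemN; rewrite /S2lam (@coef_exp_eq_upto _ _ (E N)) // => i leim.
by rewrite !coef_elam_m1_trunc leim (leq_trans leim lemN).
Qed.

Lemma S2lamS m k :
  S2lam lam m.+1 k.+1 = S2lam lam m k + (k.+1%:R - lam * m%:R) * S2lam lam m k.+1.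
Proof.
rewrite !(@S2lam_trunc m.+1) //.
have := @coef_exp_elam_m1_trunc m.+1 m k (ltnSn m).
set a := (E m.+1 ^+ k.+1)`_m.+1; set b := (E m.+1 ^+ k)`_m.
set c := (E m.+1 ^+ k.+1)`_m.
rewrite !factS !natrM => rec.
have -> : a = ((b + c) *+ k.+1 - lam * (c *+ m)) / m.+1%:R.
  by rewrite -rec; field_natr.
by field_natr.
Qed.

Lemma S2lam00 : S2lam lam 0 0 = 1.
Proof. by rewrite /S2lam expr0 coef1 divr1 mulr1. Qed.

Lemma S2lamS0 m : S2lam lam m.+1 0 = 0.
Proof. by rewrite /S2lam expr0 coef1 mulr0. Qed.

Lemma S2lam_gt m k : (m < k)%N -> S2lam lam m k = 0.
Proof. by move=> ltmk; rewrite /S2lam coef_exp_lt ?mulr0 ?coef0_elam_m1_trunc. Qed.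

Lemma dfall_S2lam x m :
  \sum_(0 <= k < m.+1) S2lam lam m k * ffall x k = dfall x lam m.
Proof.
elim: m => [|m IHm].
  by rewrite big_nat1 S2lam00 /ffall /dfall !big_ord0 mulr1.
pose g k := (k%:R - lam * m%:R) * S2lam lam m k * ffall x k.
have g0 : g 0%N = 0.
  by rewrite /g; case: (m) => [|m']; rewrite ?S2lamS0 ?mulr0 ?subrr ?mul0r.
have gSm : g m.+1 = 0 by rewrite /g S2lam_gt ?mulr0 ?mul0r.
have shift_g : \sum_(0 <= k < m.+1) g k.+1 = \sum_(0 <= k < m.+1) g k.
  by rewrite -[LHS]add0r -{1}g0 -big_nat_recl // big_nat_recr //= gSm addr0.
rewrite big_nat_recl // S2lamS0 mul0r add0r.
transitivity (\sum_(0 <= k < m.+1)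
                (S2lam lam m k * ffall x k * (x - k%:R) + g k.+1)).
  by apply: eq_big_nat => k _; rewrite /g /= S2lamS ffallS; ring.
rewrite big_split /= shift_g -big_split /=.
rewrite (eq_bigr (fun k => S2lam lam m k * ffall x k * (x - lam * m%:R))).
  by rewrite -mulr_suml IHm dfallS [lam * _]mulrC.
by move=> k _; rewrite /g /=; ring.
Qed.

End DegenerateStirling.

Section DegenerateHarmonic.
Variable R : realFieldType.
Implicit Types (x : R) (k : nat).

(* rbinom x k is the binomial coefficient C(x + k - 1, k) *)
Definition rbinom x k := drise x 1 k / k`!%:R.

Lemma rbinom0 x : rbinom x 0 = 1.
Proof. by rewrite /rbinom /drise big_ord0 divr1. Qed.

Lemma rbinomS x k : rbinom x k.+1 = rbinom x k * (x + k%:R) / k.+1%:R.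
Proof. by rewrite /rbinom driseS mulr1 factS natrM; field_natr. Qed.

Lemma rbinomD1S x k : rbinom (x + 1) k.+1 = rbinom (x + 1) k + rbinom x k.+1.
Proof.
rewrite /rbinom (driseS (x + 1)) (driseSl x) factS natrM mulr1.
by field_natr.
Qed.

Lemma sum_rbinom x k : \sum_(1 <= j < k.+1) rbinom x j = rbinom (x + 1) k - 1.
Proof.
elim: k => [|k IHk]; first by rewrite big_geq // rbinom0 subrr.
by rewrite big_nat_recr //= IHk rbinomD1S; ring.
Qed.

Lemma rbinom1 k : rbinom 1 k = 1.
Proof. by rewrite /rbinom drise1_fact divff ?natr_fact_neq0. Qed.

Lemma ffallN_rbinom x k : ffall (- x) k = (-1) ^+ k * k`!%:R * rbinom x k.
Proof. by rewrite /rbinom ffall_dfall dfallN; field_natr. Qed.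

Lemma gbinom_rbinom l k :
  gbinom l k.+1 * (-1) ^+ k = l * rbinom (1 - l) k / k.+1%:R.
Proof.
rewrite /gbinom ffall_dfall dfallSl -ffall_dfall -(opprB 1 l) ffallN_rbinom.
rewrite factS natrM.
transitivity (l * rbinom (1 - l) k / k.+1%:R * ((-1) ^+ k) ^+ 2).
  by field_natr.
by rewrite sqrr_sign mulr1.
Qed.

Variable lam : R.
Hypothesis lam0 : lam != 0.

Lemma Hlam_rbinom k : Hlam lam k = lam^-1 * (rbinom 1 k - rbinom (1 - lam) k).
Proof.
elim: k => [|k IHk]; first by rewrite /Hlam big_geq // !rbinom0 subrr mulr0.
rewrite /Hlam big_nat_recr //= -/(Hlam lam k) IHk -mulrA gbinom_rbinom.
by rewrite !rbinom1 rbinomS; field_natr.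
Qed.

Lemma Hhyp_rbinom r k :
  Hhyp lam r.+1 k = lam^-1 * (rbinom r.+1%:R k - rbinom (r.+1%:R - lam) k).
Proof.
elim: r k => [|r IHr] k; first exact: Hlam_rbinom.
have -> : Hhyp lam r.+2 k = \sum_(1 <= j < k.+1) Hhyp lam r.+1 j by [].
under eq_bigr do rewrite IHr.
rewrite -mulr_sumr sumrB !sum_rbinom [r.+1%:R - lam + 1]addrAC natr1.
by ring.
Qed.

Lemma signed_Hhyp r k : (-1) ^+ k * Hhyp lam r.+1 k * k`!%:R
  = lam^-1 * (ffall (- r.+1%:R) k - ffall (lam - r.+1%:R) k).
Proof.
by rewrite Hhyp_rbinom -(opprB r.+1%:R lam) !ffallN_rbinom; field_natr.
Qed.

Lemma sum_signed_Hhyp_S2lam n r :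
  \sum_(1 <= k < n.+2) (-1) ^+ k * Hhyp lam r.+1 k * k`!%:R * S2lam lam n.+1 k
  = (-1) ^+ n.+1 * drise r.+1%:R lam n * n.+1%:R.
Proof.
set x := r.+1%:R.
pose G k := lam^-1 * (S2lam lam n.+1 k * ffall (- x) k
                      - S2lam lam n.+1 k * ffall (lam - x) k).
transitivity (\sum_(0 <= k < n.+2) G k).
  rewrite [RHS]big_ltn // {1}/G S2lamS0 !mul0r subrr mulr0 add0r.
  by apply: eq_big_nat => k _; rewrite signed_Hhyp /G; ring.
by rewrite -mulr_sumr sumrB !dfall_S2lam dfall_diff_shift.
Qed.

End DegenerateHarmonic.

Theorem theorem2 (R : realFieldType) (lam : R) (n r : nat) :
  lam != 0 -> (0 < n)%N -> (0 < r)%N ->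
  (\sum_(1 <= k < n.+1) (-1) ^+ k * Hhyp lam r k * (k`!)%:R * S2lam lam n k
     = (-1) ^+ n * drise r%:R lam n.-1 * n%:R)
  /\
  (drise 1 lam n.-1 != 0 ->
     (drise 1 lam n.-1)^-1 *
       \sum_(1 <= k < n.+1) (-1) ^+ (n - k) * Hlam lam k * (k`!)%:R * S2lam lam n k
     = n%:R).
Proof.
move=> lam0; case: n => // n _; case: r => // r _.
split=> [|drise_neq0]; first exact: sum_signed_Hhyp_S2lam.
rewrite (eq_big_nat _ _ (F2 := fun k => (-1) ^+ n.+1 *
    ((-1) ^+ k * Hhyp lam 1 k * k`!%:R * S2lam lam n.+1 k))); last first.
  by move=> k /andP[_ lekn]; rewrite exprB ?unitrN1 // invr_sign /=; ring.
rewrite -mulr_sumr sum_signed_Hhyp_S2lam // mulr1n.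
by rewrite -!mulrA signrMK mulKf.
Qed.
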